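(* Let $X,Y,Z$ be random variables on finite alphabets $\mathcal{X},\mathcal{Y},\mathcal{Z}$ with a given joint distribution. For each $y\in\mathcal{Y}$ with $\Pr(Y=y)>0$, let $(A_y,B_y,C_y)$ be the random triple on $\mathcal{X}\times\mathcal{Y}\times\mathcal{Z}$ defined by $$\Pr(A_y=x,B_y=y',C_y=z)=\begin{cases}0 & \text{if } \Pr(Z=z)=0,\\ \dfrac{\Pr(X=x,Y=y',Z=z)\,\Pr(Z=z\mid Y=y)}{\Pr(Z=z)} & \text{otherwise.}\end{cases}$$ Then $$H(X\mid Z)=\sum_{y\in\mathcal{Y},\,\Pr(Y=y)>0}\Pr(Y=y)\,H(A_y\mid C_y).$$
   Context: $H$ denotes Shannon entropy. The triple $(A_y,B_y,C_y)$ is the paper's ''do-operation'' applied to the joint distribution of $(X,Y,Z)$ with the distribution of $Z$ given $Y=y$ as the new target marginal. *)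

From mathcomp Require Import all_boot all_order all_algebra.
From mathcomp Require Import reals exp.
Set Implicit Arguments. Unset Strict Implicit. Unset Printing Implicit Defensive.
Import Order.TTheory GRing.Theory Num.Theory.
Local Open Scope ring_scope.

Section Info.
Variables (R : realType) (TX TY TZ : finType).

Definition is_distr (P : TX -> TY -> TZ -> R) :=
  (forall x y z, 0 <= P x y z) /\ \sum_x \sum_y \sum_z P x y z = 1.

Definition log2 (t : R) : R := ln t / ln 2.

Definition margZ (P : TX -> TY -> TZ -> R) z : R := \sum_x \sum_y P x y z.
Definition margY (P : TX -> TY -> TZ -> R) y : R := \sum_x \sum_z P x y z.
Definition margYZ (P : TX -> TY -> TZ -> R) y z : R := \sum_x P x y z.
Definition margXZ (P : TX -> TY -> TZ -> R) x z : R := \sum_y P x y z.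

Definition condEntXZ (P : TX -> TY -> TZ -> R) : R :=
  - \sum_x \sum_z (if margXZ P x z == 0 then 0
                   else margXZ P x z * log2 (margXZ P x z / margZ P z)).

(* The do-operation: joint law of (A_y, B_y, C_y). Pr(Z=z | Y=y) = Pr(Y=y,Z=z)/Pr(Y=y). *)
Definition doOp (P : TX -> TY -> TZ -> R) (y : TY) : TX -> TY -> TZ -> R :=
  fun x y' z => if margZ P z == 0 then 0
                else P x y' z * (margYZ P y z / margY P y) / margZ P z.

End Info.

(* The do-operation reweights the joint law by a factor depending on z only,
   namely Pr(Z=z | Y=y) / Pr(Z=z). Conditional entropy is a sum over z of
   terms that scale linearly under such a reweighting, because the ratio
   Pr(X=x, Z=z) / Pr(Z=z) is unchanged. Averaging over y with weights Pr(Y=y),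
   the factors add up to sum_y Pr(Y=y, Z=z) / Pr(Z=z) = 1 wherever Pr(Z=z) > 0,
   while the z with Pr(Z=z) = 0 contribute nothing on either side. *)
From mathcomp Require Import all_boot all_order all_algebra.
From mathcomp Require Import reals exp.
Set Implicit Arguments. Unset Strict Implicit. Unset Printing Implicit Defensive.
Import Order.TTheory GRing.Theory Num.Theory.
Local Open Scope ring_scope.

Section EntropySummand.
Variable R : realType.

Definition entropy_summand (a b : R) : R :=
  if a == 0 then 0 else a * log2 (a / b).

Lemma entropy_summand0 (b : R) : entropy_summand 0 b = 0.
Proof. by rewrite /entropy_summand eqxx. Qed.

Lemma entropy_summandZ (c a b : R) :
  entropy_summand (a * c) (b * c) = c * entropy_summand a b.
Proof.
have [-> | c0] := eqVneq c 0; first by rewrite !mulr0 entropy_summand0 mul0r.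
rewrite /entropy_summand mulf_eq0 (negbTE c0) orbF.
case: eqP => _; first by rewrite mulr0.
have -> : a * c / (b * c) = a / b by rewrite invfM mulrACA mulfV // mulr1.
by rewrite mulrAC mulrC.
Qed.

End EntropySummand.

Section ConditionalEntropy.
Variables (R : realType) (TX TY TZ : finType).
Implicit Types (P Q : TX -> TY -> TZ -> R) (w : TZ -> R).

Definition condEntXZ_at P z : R :=
  - \sum_x entropy_summand (margXZ P x z) (margZ P z).

Lemma condEntXZ_sum P : condEntXZ P = \sum_z condEntXZ_at P z.
Proof. by rewrite /condEntXZ exchange_big -sumrN. Qed.

Lemma margXZ_scaleZ P Q w x z :
  (forall x y z, Q x y z = P x y z * w z) -> margXZ Q x z = margXZ P x z * w z.
Proof. by move=> QE; rewrite /margXZ big_distrl; apply: eq_bigr => y _. Qed.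

Lemma margZ_scaleZ P Q w z :
  (forall x y z, Q x y z = P x y z * w z) -> margZ Q z = margZ P z * w z.
Proof.
move=> QE; rewrite /margZ big_distrl; apply: eq_bigr => x _.
exact: margXZ_scaleZ.
Qed.

Lemma condEntXZ_at_scaleZ P Q w z :
  (forall x y z, Q x y z = P x y z * w z) ->
  condEntXZ_at Q z = w z * condEntXZ_at P z.
Proof.
move=> QE; rewrite /condEntXZ_at mulrN big_distrr (margZ_scaleZ _ QE).
by congr (- _); apply: eq_bigr => x _; rewrite (margXZ_scaleZ _ _ QE) entropy_summandZ.
Qed.

Lemma sum_margYZ P z : \sum_y margYZ P y z = margZ P z.
Proof. exact: exchange_big. Qed.

Definition doWeight P y z : R := margYZ P y z / margY P y / margZ P z.

(* Division by [0] yields [0], so [doWeight] vanishes wherever [doOp] does. *)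
Lemma doOpE P y x y' z : doOp P y x y' z = P x y' z * doWeight P y z.
Proof.
rewrite /doOp /doWeight; have [-> | _] := eqVneq (margZ P z) 0.
  by rewrite invr0 !mulr0.
by rewrite !mulrA.
Qed.

Section Nonnegative.
Variable P : TX -> TY -> TZ -> R.
Hypothesis P_ge0 : forall x y z, 0 <= P x y z.

Lemma margY_ge0 y : 0 <= margY P y.
Proof. by apply: sumr_ge0 => x _; apply: sumr_ge0. Qed.

Lemma margYZ_eq0 y z : margY P y = 0 -> margYZ P y z = 0.
Proof.
move/eqP; rewrite psumr_eq0 => [/allP PY0|x _]; last exact: sumr_ge0.
apply: big1 => x _; move: (PY0 x (mem_index_enum x)).
by rewrite psumr_eq0 // => /allP/(_ z (mem_index_enum z))/eqP.
Qed.

Lemma margXZ_eq0 x z : margZ P z = 0 -> margXZ P x z = 0.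
Proof.
move/eqP; rewrite psumr_eq0 => [/allP/(_ x (mem_index_enum x))/eqP //|x' _].
exact: sumr_ge0.
Qed.

Lemma condEntXZ_at_eq0 z : margZ P z = 0 -> condEntXZ_at P z = 0.
Proof.
move=> Pz0; rewrite /condEntXZ_at big1 ?oppr0 // => x _.
by rewrite margXZ_eq0 // entropy_summand0.
Qed.

Lemma sum_margY_doWeight z : margZ P z != 0 ->
  \sum_(y | 0 < margY P y) margY P y * doWeight P y z = 1.
Proof.
move=> Pz0; rewrite -[RHS](mulfV Pz0) -[X in X / _]sum_margYZ big_distrl /=.
rewrite [RHS](bigID (fun y => 0 < margY P y)) /= [X in _ = _ + X]big1 ?addr0.
  apply: eq_bigr => y Py; rewrite /doWeight mulrA; congr (_ / _).
  by rewrite mulrCA mulfV ?gt_eqF ?mulr1.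
move=> y; rewrite lt_def margY_ge0 andbT negbK => /eqP PY0.
by rewrite margYZ_eq0 // mul0r.
Qed.

End Nonnegative.

End ConditionalEntropy.

Theorem lemma1 (R : realType) (TX TY TZ : finType) (P : TX -> TY -> TZ -> R) :
  is_distr P ->
  condEntXZ P = \sum_(y : TY | 0 < margY P y) margY P y * condEntXZ (doOp P y).
Proof.
move=> [P_ge0 _]; rewrite condEntXZ_sum.
under [RHS]eq_bigr => y _ do rewrite condEntXZ_sum big_distrr.
rewrite exchange_big /=; apply: eq_bigr => z _.
under eq_bigr => y _ do rewrite (condEntXZ_at_scaleZ z (doOpE P y)) mulrA.
rewrite -big_distrl /=.
have [Pz0 | Pz0] := eqVneq (margZ P z) 0.
  by rewrite condEntXZ_at_eq0 // mulr0.
by rewrite sum_margY_doWeight // mul1r.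
Qed.
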